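(* Let $s\geq 2$ be an integer. Among the complete graphs $K_m$ with $m\geq s+2$, there are exactly $s-1$ for which there exists a function $g:A\to B$ with $|g(A)|=s$ and $fix(K_m)=fix(F_{K_m})$; namely these are $K_{s+2},K_{s+3},\dots,K_{2s}$.
   Context: A set $S\subseteq V(H)$ is a fixing set of a graph $H$ if the only automorphism of $H$ fixing every vertex of $S$ is the identity; $fix(H)$ is the minimum cardinality of a fixing set of $H$. Functigraph: let $G_1,G_2$ be disjoint copies of a connected graph $G$, with $A=V(G_1)$, $B=V(G_2)$, and let $g:A\to B$ be a function. The functigraph $F_G$ has vertex set $A\cup B$ and edge set $E(G_1)\cup E(G_2)\cup\{ug(u):u\in A\}$. *)

From mathcomp Require Import all_boot all_fingroup.
Set Implicit Arguments. Unset Strict Implicit. Unset Printing Implicit Defensive.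

Definition is_aut (T : finType) (e : rel T) (p : {perm T}) : bool :=
  [forall x, forall y, e (p x) (p y) == e x y].

Definition fixing_set (T : finType) (e : rel T) (S : {set T}) : bool :=
  [forall p : {perm T}, (is_aut e p && [forall x in S, p x == x]) ==> (p == 1%g)].

Definition has_fixing_set_of_size (T : finType) (e : rel T) (n : nat) : bool :=
  [exists S : {set T}, (#|S| == n) && fixing_set e S].

Lemma has_fixing_set_ex (T : finType) (e : rel T) :
  exists n, has_fixing_set_of_size e n.
Proof.
exists #|[set: T]|; apply/existsP; exists [set: T]; rewrite eqxx /=.
apply/forallP => p; apply/implyP => /andP [_ /forallP H].
apply/eqP/permP => x; rewrite perm1; exact/eqP/(implyP (H x))/in_setT.
Qed.

Definition fixnum (T : finType) (e : rel T) : nat := ex_minn (has_fixing_set_ex e).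

Definition complete_graph (m : nat) : rel 'I_m := fun x y => x != y.

(* The functigraph F_G: vertex set A + B with A = inl (copy G_1), B = inr
   (copy G_2); edges: those of G_1, those of G_2, and u -- g(u) for u in A. *)
Definition functigraph (T : finType) (e : rel T) (g : T -> T) : rel (T + T) :=
  fun x y => match x, y with
  | inl a, inl b => e a b
  | inr a, inr b => e a b
  | inl a, inr b => g a == b
  | inr b, inl a => g a == b
  end.

Arguments complete_graph m : clear implicits.

From mathcomp Require Import all_boot all_fingroup zify.
Set Implicit Arguments. Unset Strict Implicit. Unset Printing Implicit Defensive.

(* In K_m every permutation is an automorphism, so a fixing set misses at most
   one vertex and fix(K_m) = m - 1.  In F = F_{K_m}, transposing two vertices of
   A with the same image, or two vertices of B outside g(A), is an automorphism;
   hence a fixing set misses at most |g(A)| vertices of A and |g(A)| + 1 of B,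
   and fix(F) >= 2m - 2s - 1 > m - 1 as soon as m > 2s.
   For s + 2 <= m <= 2s take g(i) = i for i < s, g(s + j) = j for j < m - s - 1
   and g(m - 1) = 0.  Its fibres over j < m - s - 1 have at least two points and
   the others are singletons; refining the count above (at most one singleton
   fibre can have both of its copies outside the set) gives fix(F) >= m - 1, and
   fixing [m - s - 1, m) minus {s - 1} in A and [s, m - 1) in B suffices. *)

Section FixingSets.
Variables (T : finType) (e : rel T).

Lemma is_autP (p : {perm T}) :
  reflect (forall x y, e (p x) (p y) = e x y) (is_aut e p).
Proof.
apply: (iffP forallP) => [H x y | H x]; first exact/eqP/(forallP (H x)).
by apply/forallP => y; rewrite H.
Qed.

Lemma fixing_setP (S : {set T}) :
  reflect (forall p : {perm T}, is_aut e p -> {in S, forall x, p x = x} -> p = 1%g)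
          (fixing_set e S).
Proof.
apply: (iffP forallP) => [H p ep pS | H p].
  apply/eqP; move/implyP: (H p); apply; rewrite ep.
  by apply/forallP => x; apply/implyP => /pS ->.
apply/implyP => /andP [ep /forallP pS]; apply/eqP/H => // x xS.
exact/eqP/(implyP (pS x)).
Qed.

Lemma fixnum_leq (S : {set T}) : fixing_set e S -> fixnum e <= #|S|.
Proof.
move=> eS; rewrite /fixnum; case: ex_minnP => n _; apply.
by apply/existsP; exists S; rewrite eqxx eS.
Qed.

Lemma fixnum_witness : exists2 S : {set T}, fixing_set e S & #|S| = fixnum e.
Proof.
by rewrite /fixnum; case: ex_minnP => n /existsP [S /andP [/eqP <- eS]] _; exists S.
Qed.

End FixingSets.

Section Permutations.
Variable T : finType.
Implicit Types (p : {perm T}) (A : {set T}).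

Lemma perm_on_fixC p A : {in ~: A, forall x, p x = x} -> perm_on A p.
Proof.
move=> pA; apply/subsetP => x; rewrite inE; apply: contraR => xA.
by rewrite pA ?inE.
Qed.

Lemma perm_fixC_eq1 p A : {in ~: A, forall x, p x = x} -> #|A| <= 1 -> p = 1%g.
Proof. by move/perm_on_fixC; apply: perm_on_id. Qed.

Lemma tperm_eq1 (a b : T) : tperm a b = 1%g -> a = b.
Proof. by move/permP/(_ a); rewrite tpermL perm1. Qed.

Lemma tperm_fix (P : pred T) (a b x : T) :
  P x -> ~~ P a -> ~~ P b -> tperm a b x = x.
Proof.
by move=> Px Pa Pb; apply: tpermD; [apply: contraNneq Pa | apply: contraNneq Pb] => ->.
Qed.

End Permutations.

Section CompleteGraph.
Variable m : nat.
Local Notation K := (complete_graph m).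

Lemma is_aut_complete (p : {perm 'I_m}) : is_aut K p.
Proof. by apply/is_autP => x y; rewrite /complete_graph (inj_eq perm_inj). Qed.

Lemma fixing_set_complete_card (S : {set 'I_m}) : fixing_set K S -> m - 1 <= #|S|.
Proof.
move/fixing_setP => KS.
have : #|~: S| <= 1.
  apply/card_le1_eqP => x y; rewrite !inE => xS yS; apply: tperm_eq1.
  by apply: KS (is_aut_complete _) _ => z zS; apply: (tperm_fix (P := mem S)).
by have := cardsC S; rewrite card_ord; lia.
Qed.

Lemma fixing_set_completeC1 (x : 'I_m) : fixing_set K [set~ x].
Proof.
by apply/fixing_setP => p _ px; apply: (perm_fixC_eq1 (A := [set x])); rewrite ?cards1.
Qed.

Lemma fixnum_complete : 0 < m -> fixnum K = m - 1.
Proof.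
move=> m_gt0; apply/eqP; rewrite eqn_leq; apply/andP; split.
  have <- : #|[set~ Ordinal m_gt0]| = m - 1 by rewrite cardsC1 card_ord subn1.
  exact/fixnum_leq/fixing_set_completeC1.
by have [S KS <-] := fixnum_witness K; apply: fixing_set_complete_card.
Qed.

End CompleteGraph.

Section PermSum.
Variable T : finType.
Implicit Types p q : {perm T}.

Definition sum_fun p q (x : T + T) : T + T :=
  match x with inl a => inl (p a) | inr b => inr (q b) end.

Lemma sum_fun_inj p q : injective (sum_fun p q).
Proof. by case=> [a|a] [b|b] //= [] /perm_inj ->. Qed.

Definition perm_sum p q : {perm T + T} := perm (@sum_fun_inj p q).

Lemma perm_sum_inl p q a : perm_sum p q (inl a) = inl (p a).
Proof. by rewrite permE. Qed.

Lemma perm_sum_inr p q b : perm_sum p q (inr b) = inr (q b).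
Proof. by rewrite permE. Qed.

Lemma perm_sum_eq1 p q : perm_sum p q = 1%g -> p = 1%g /\ q = 1%g.
Proof.
move/permP => pq1; split; apply/permP => x; rewrite perm1.
  by move: (pq1 (inl x)); rewrite perm_sum_inl perm1 => [[]].
by move: (pq1 (inr x)); rewrite perm_sum_inr perm1 => [[]].
Qed.

Lemma perm_sum_sides (r : {perm T + T}) :
  (forall a, exists a', r (inl a) = inl a') -> (forall b, exists b', r (inr b) = inr b') ->
  exists p q, r = perm_sum p q.
Proof.
move=> rl rr.
pose f a := if r (inl a) is inl a' then a' else a.
pose g b := if r (inr b) is inr b' then b' else b.
have rf a : r (inl a) = inl (f a) by have [a' ra] := rl a; rewrite /f ra.
have rg b : r (inr b) = inr (g b) by have [b' rb] := rr b; rewrite /g rb.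
have f_inj : injective f.
  by move=> a1 a2 fa; apply/(@inl_inj _ T)/(@perm_inj _ r); rewrite !rf fa.
have g_inj : injective g.
  by move=> b1 b2 gb; apply/(@inr_inj T)/(@perm_inj _ r); rewrite !rg gb.
exists (perm f_inj), (perm g_inj); apply/permP => -[a|b].
  by rewrite perm_sum_inl permE.
by rewrite perm_sum_inr permE.
Qed.

End PermSum.

Section Functigraph.
Variables (T : finType) (e : rel T) (g : T -> T).
Local Notation F := (functigraph e g).

Lemma is_aut_functigraph_sum (p q : {perm T}) :
  is_aut e p -> is_aut e q -> (forall a, g (p a) = q (g a)) ->
  is_aut F (perm_sum p q).
Proof.
move=> /is_autP ep /is_autP eq gpq; apply/is_autP => -[a|a] [b|b];
  by rewrite ?perm_sum_inl ?perm_sum_inr /= ?ep ?eq ?gpq ?(inj_eq perm_inj).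
Qed.

Lemma functigraph_aut_sum_comm (p q : {perm T}) :
  is_aut F (perm_sum p q) -> forall a, g (p a) = q (g a).
Proof.
move/is_autP => Fpq a; apply/eqP.
by have := Fpq (inl a) (inr (g a)); rewrite perm_sum_inl perm_sum_inr /= eqxx.
Qed.

Lemma fixing_set_functigraph_sum (S : {set T + T}) (p q : {perm T}) :
  fixing_set F S -> is_aut e p -> is_aut e q -> (forall a, g (p a) = q (g a)) ->
  (forall a, inl a \in S -> p a = a) -> (forall b, inr b \in S -> q b = b) ->
  p = 1%g /\ q = 1%g.
Proof.
move/fixing_setP => FS ep eq gpq pS qS; apply: perm_sum_eq1.
apply: FS; first exact: is_aut_functigraph_sum.
by move=> [a|b] xS; rewrite ?perm_sum_inl ?perm_sum_inr ?pS ?qS.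
Qed.

End Functigraph.

Section SumSets.
Variable T : finType.
Implicit Types (A B : {set T}) (S : {set T + T}).

Definition left_compl S := [set a | inl a \notin S].
Definition right_compl S := [set b | inr b \notin S].

Lemma card_sum_set S : #|S| + #|left_compl S| + #|right_compl S| = 2 * #|T|.
Proof.
have cnt A : #|A| = \sum_(a : T) (a \in A) by rewrite -sum1_card big_mkcond.
rewrite -sum1_card big_mkcond big_sumType /= !cnt -addnA addnACA.
rewrite -!big_split mul2n -addnn -!sum1_card -big_split; apply: eq_bigr => x _.
by rewrite !inE; case: (inl x \in S); case: (inr x \in S).
Qed.

Definition setSum A B : {set T + T} :=
  [set x | if x is inl a then a \in A else if x is inr b then b \in B else false].

Lemma card_setSum A B : #|setSum A B| = #|A| + #|B|.
Proof.
have := card_sum_set (setSum A B).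
have -> : left_compl (setSum A B) = ~: A by apply/setP => a; rewrite !inE.
have -> : right_compl (setSum A B) = ~: B by apply/setP => b; rewrite !inE.
by have := cardsC A; have := cardsC B; lia.
Qed.

End SumSets.

Section FunctigraphComplete.
Variables (m : nat) (g : 'I_m -> 'I_m).
Local Notation F := (functigraph (complete_graph m) g).
Local Notation img := [set g x | x : 'I_m].

Lemma left_compl_inj S : fixing_set F S -> {in left_compl S &, injective g}.
Proof.
move=> FS a b; rewrite !inE => aS bS gab; apply: tperm_eq1.
have gt c : g (tperm a b c) = (1 : {perm 'I_m})%g (g c).
  by rewrite perm1; case: tpermP => [->|->|] //; rewrite gab.
have [] // := fixing_set_functigraph_sum FS (is_aut_complete _) (is_aut_complete _) gt.
  by move=> c cS; apply: (tperm_fix (P := fun c => inl c \in S)).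
by move=> c; rewrite perm1.
Qed.

Lemma card_right_compl_out S : fixing_set F S -> #|right_compl S :\: img| <= 1.
Proof.
move=> FS; apply/card_le1_eqP => a b; rewrite !inE => /andP [aI aS] /andP [bI bS].
apply/esym/tperm_eq1.
have gt c : g ((1 : {perm 'I_m})%g c) = tperm a b (g c).
  by rewrite perm1 (tperm_fix (P := mem img)) //; apply: imset_f.
have [] // := fixing_set_functigraph_sum FS (is_aut_complete _) (is_aut_complete _) gt.
  by move=> c; rewrite perm1.
by move=> c cS; apply: (tperm_fix (P := fun c => inr c \in S)).
Qed.

Lemma functigraph_fixing_card S : fixing_set F S -> 2 * m <= #|S| + 2 * #|img| + 1.
Proof.
move=> FS.
have left_le : #|left_compl S| <= #|img|.
  rewrite -(card_in_imset (left_compl_inj FS)).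
  by apply/subset_leq_card/subsetP => _ /imsetP [a _ ->]; apply: imset_f.
have right_le : #|right_compl S| <= #|img| + 1.
  rewrite -(cardsID img (right_compl S)) leq_add ?card_right_compl_out //.
  exact/subset_leq_card/subsetIr.
have := card_sum_set S; rewrite card_ord => <-.
rewrite -!addnA leq_add2l; apply: leq_trans (leq_add left_le right_le) _.
by rewrite addnA addnn -mul2n.
Qed.

(* As [c] is not in the image of [g], the neighbours of [inr c] are exactly the
   other vertices of B. *)
Lemma functigraph_aut_sides (c : 'I_m) (r : {perm 'I_m + 'I_m}) :
  c \notin img -> is_aut F r -> r (inr c) = inr c -> exists p q, r = perm_sum p q.
Proof.
move=> cI /is_autP Fr rc; apply: perm_sum_sides.
- move=> a; case ra: (r (inl a)) => [a'|b]; first by exists a'.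
  have gac : g a != c by apply: contraNneq cI => <-; apply: imset_f.
  have := Fr (inl a) (inr c); rewrite ra rc /= (negbTE gac) /complete_graph.
  by move=> /negbFE /eqP bc; move: ra; rewrite bc -rc => /perm_inj.
- move=> b; case rb: (r (inr b)) => [a|b']; last by exists b'.
  have bc : b != c by apply: contraPneq rb => ->; rewrite rc.
  have := Fr (inr b) (inr c); rewrite rb rc /= /complete_graph bc => /eqP gac.
  by case/negP: cI; rewrite -gac; apply: imset_f.
Qed.

Lemma fixnum_functigraph_complete : 2 * m <= fixnum F + 2 * #|img| + 1.
Proof. by have [S FS <-] := fixnum_witness F; apply: functigraph_fixing_card. Qed.

End FunctigraphComplete.

Lemma card_ord_range (m n1 n2 : nat) :
  n1 <= n2 <= m -> #|[set x : 'I_m | n1 <= x < n2]| = n2 - n1.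
Proof.
move=> /andP [n12 n2m].
have card_lt n : n <= m -> #|[set x : 'I_m | x < n]| = n.
  move=> nm; have w_inj : injective (widen_ord nm) by move=> x y [] /val_inj.
  rewrite -[RHS](card_ord n) -(card_imset _ w_inj).
  apply: eq_card => x; rewrite inE; apply/idP/imsetP => [xn | [y _ ->]]; last exact: (ltn_ord y).
  by exists (Ordinal xn) => //; apply: val_inj.
rewrite (@eq_card _ _ ([set x : 'I_m | x < n2] :\: [set x : 'I_m | x < n1])) => [|x]; last first.
  by rewrite !inE -leqNgt andbC.
rewrite cardsDS ?card_lt ?(leq_trans n12) //.
by apply/subsetP => x; rewrite !inE => /leq_trans; apply.
Qed.

Section Extremal.
Variables s m : nat.
Hypotheses (s_ge2 : 2 <= s) (m_ge : s + 2 <= m) (m_le : m <= 2 * s).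
Local Notation F g := (functigraph (complete_graph m) g).

Definition ext_val (i : nat) : nat :=
  if i < s then i else if i < m.-1 then i - s else 0.

Lemma ext_val_lt i : ext_val i < s.
Proof. rewrite /ext_val; repeat case: ifP => ?; lia. Qed.

Lemma s_lt_m : s < m.
Proof. lia. Qed.

Definition ext_map (i : 'I_m) : 'I_m := Ordinal (ltn_trans (ext_val_lt i) s_lt_m).

Lemma ext_map_id (j : 'I_m) : j < s -> ext_map j = j.
Proof. by move=> js; apply: val_inj; rewrite /= /ext_val js. Qed.

Lemma ext_map_single (a j : 'I_m) : m - s - 1 <= j -> ext_map a = j -> a = j.
Proof.
move=> hj /(congr1 val) /=; rewrite /ext_val => aj; apply: ord_inj.
by move: aj (ltn_ord a); repeat case: ifP => ?; lia.
Qed.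

Lemma img_ext_map : [set ext_map x | x : 'I_m] = [set x : 'I_m | 0 <= x < s].
Proof.
apply/setP => x; rewrite inE; apply/imsetP/idP => [[i _ ->] | xs] /=.
  exact: ext_val_lt.
by exists x => //; rewrite ext_map_id.
Qed.

Lemma card_img_ext_map : #|[set ext_map x | x : 'I_m]| = s.
Proof. by rewrite img_ext_map card_ord_range ?subn0 //= (ltnW s_lt_m). Qed.

Lemma ext_map_tperm (j j' c : 'I_m) :
  m - s - 1 <= j < s -> m - s - 1 <= j' < s ->
  ext_map (tperm j j' c) = tperm j j' (ext_map c).
Proof.
move=> /andP [j1 j2] /andP [j1' j2'].
case: tpermP => [->|->|cj cj'].
- by rewrite !ext_map_id // tpermL.
- by rewrite !ext_map_id // tpermR.
- by rewrite tpermD //; apply/eqP => /esym; [move/(ext_map_single j1) | move/(ext_map_single j1')].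
Qed.

Definition doubly_free (S : {set 'I_m + 'I_m}) :=
  [set j : 'I_m | [&& m - s - 1 <= j < s, inl j \notin S & inr j \notin S]].

Lemma card_doubly_free S : fixing_set (F ext_map) S -> #|doubly_free S| <= 1.
Proof.
move=> FS; apply/card_le1_eqP => j j'; rewrite !inE.
move=> /and3P [jj jl jr] /and3P [jj' jl' jr']; apply/esym/tperm_eq1.
have [] // := fixing_set_functigraph_sum FS (is_aut_complete _) (is_aut_complete _)
  (fun c => ext_map_tperm c jj jj').
  by move=> c cS; apply: (tperm_fix (P := fun c => inl c \in S)).
by move=> c cS; apply: (tperm_fix (P := fun c => inr c \in S)).
Qed.

Lemma ext_fixing_card S : fixing_set (F ext_map) S -> m - 1 <= #|S|.
Proof.
move=> FS.
pose img := [set ext_map x | x : 'I_m].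
pose I := [set ext_map a | a in left_compl S].
pose H := right_compl S :&: img.
pose low := [set x : 'I_m | 0 <= x < m - s - 1].
have card_I : #|I| = #|left_compl S| by rewrite card_in_imset //; apply: left_compl_inj.
have right_le : #|right_compl S| <= #|H| + 1.
  by rewrite -(cardsID img) leq_add ?card_right_compl_out.
have IH_img : I :|: H \subset img.
  by apply/subsetP => b; rewrite !inE => /orP [/imsetP [a _ ->] | /andP [_ //]]; apply: imset_f.
have IH_low : I :&: H \subset low :|: doubly_free S.
  apply/subsetP => b; rewrite !inE => /andP [/imsetP [a aL ->] /andP [bR _]].
  case: (ltnP (ext_map a) (m - s - 1)) => [// | hb] /=.
  rewrite -(ext_map_single hb erefl) in aL bR *; move: aL bR; rewrite !inE => -> ->.
  by rewrite ext_val_lt.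
have card_low : #|low :|: doubly_free S| <= m - s.
  apply: leq_trans (leq_card_setU _ _) _.
  rewrite card_ord_range ?card_doubly_free //; last by lia.
  by have := card_doubly_free FS; lia.
rewrite -(leq_add2r (#|left_compl S| + #|right_compl S|)) [leqRHS]addnA card_sum_set.
have := cardsUI I H; have := subset_leq_card IH_img; have := subset_leq_card IH_low.
by rewrite card_img_ext_map card_I card_ord; lia.
Qed.

Definition fixed_left := [set a : 'I_m | (m - s - 1 <= a) && (a != s.-1 :> nat)].
Definition fixed_right := [set b : 'I_m | s <= b < m.-1].

Lemma card_fixed_left : #|fixed_left| = s.
Proof.
have s1_lt : s.-1 < m by lia.
rewrite (@eq_card _ _ ([set a : 'I_m | m - s - 1 <= a < m] :\ Ordinal s1_lt)) => [|a]; last first.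
  by rewrite !inE ltn_ord andbC andbT -val_eqE.
have := cardsD1 (Ordinal s1_lt) [set a : 'I_m | m - s - 1 <= a < m].
by rewrite card_ord_range ?inE /=; lia.
Qed.

Lemma card_fixed_right : #|fixed_right| = m - s - 1.
Proof. by rewrite card_ord_range; lia. Qed.

Lemma ext_map_onto_low (b : 'I_m) : b < s.-1 -> exists2 a, a \in fixed_left & ext_map a = b.
Proof.
move=> bs; case: (ltnP b (m - s - 1)) => hb; last first.
  by exists b; rewrite ?inE ?ext_map_id //; lia.
have sb_lt : s + b < m by lia.
exists (Ordinal sb_lt); first by rewrite inE /=; lia.
by apply: ord_inj; rewrite /= /ext_val; repeat case: ifP => ?; lia.
Qed.

Lemma ext_comm_right_eq1 (p q : {perm 'I_m}) :
  (forall a, ext_map (p a) = q (ext_map a)) ->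
  {in fixed_left, forall a, p a = a} -> {in fixed_right, forall b, q b = b} -> q = 1%g.
Proof.
move=> comm pL qR.
have q_low (b : 'I_m) : b < s.-1 -> q b = b.
  by case/ext_map_onto_low => a aL <-; rewrite -comm pL.
have q_s1 (b : 'I_m) : b = s.-1 :> nat -> q b = b.
  move=> bs; have bs' : b < s by lia.
  have : q b < s by rewrite -{1}(ext_map_id bs') -comm ext_val_lt.
  case: (ltnP (q b) s.-1) => [/q_low/perm_inj // | ge lt]; apply: ord_inj; lia.
apply: (perm_fixC_eq1 (A := [set b : 'I_m | m.-1 <= b < m])); last first.
  by rewrite card_ord_range; lia.
move=> b; rewrite !inE ltn_ord andbT -ltnNge => bm.
case: (ltngtP b s.-1) => [/q_low // | bs | /q_s1 //].
by apply: qR; rewrite inE bm; lia.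
Qed.

Lemma ext_comm_left_eq1 (p : {perm 'I_m}) :
  (forall a, ext_map (p a) = ext_map a) -> {in fixed_left, forall a, p a = a} -> p = 1%g.
Proof.
move=> comm pL.
have pC : perm_on (~: fixed_left) p by apply: perm_on_fixC => a; rewrite setCK; apply: pL.
have low a : a \notin fixed_left -> a < s by rewrite inE negb_and -ltnNge negbK; lia.
apply/permP => a; rewrite perm1; case: (boolP (a \in fixed_left)) => [/pL // | aL].
have paL : p a \notin fixed_left by rewrite -in_setC (perm_closed a pC) in_setC.
by rewrite -(ext_map_id (low _ paL)) comm ext_map_id // low.
Qed.

Lemma ext_fixing_set : fixing_set (F ext_map) (setSum fixed_left fixed_right).
Proof.
apply/fixing_setP => r Fr rS.
have s_out : Ordinal s_lt_m \notin [set ext_map x | x : 'I_m].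
  by rewrite img_ext_map inE ltnn andbF.
have s_in : inr (Ordinal s_lt_m) \in setSum fixed_left fixed_right.
  by rewrite !inE /=; lia.
have [p [q rpq]] := functigraph_aut_sides s_out Fr (rS _ s_in).
move: Fr rS; rewrite {}rpq => Fr rS.
have pL a : a \in fixed_left -> p a = a.
  by move=> aL; move: (rS (inl a)); rewrite perm_sum_inl inE => /(_ aL) [].
have qR b : b \in fixed_right -> q b = b.
  by move=> bR; move: (rS (inr b)); rewrite perm_sum_inr inE => /(_ bR) [].
have comm := functigraph_aut_sum_comm Fr.
have q1 : q = 1%g := ext_comm_right_eq1 comm pL qR; subst q.
have p1 : p = 1%g by apply: ext_comm_left_eq1 _ pL => a; rewrite comm perm1.
by subst p; apply/permP => -[a|b]; rewrite ?perm_sum_inl ?perm_sum_inr !perm1.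
Qed.

Lemma fixnum_functigraph_ext : fixnum (F ext_map) = m - 1.
Proof.
apply/eqP; rewrite eqn_leq; apply/andP; split.
  have <- : #|setSum fixed_left fixed_right| = m - 1.
    by rewrite card_setSum card_fixed_left card_fixed_right; lia.
  exact/fixnum_leq/ext_fixing_set.
by have [S FS <-] := fixnum_witness (F ext_map); apply: ext_fixing_card.
Qed.

End Extremal.

Unset Implicit Arguments.
Theorem proposition3p5 (s : nat) : 2 <= s ->
  forall m : nat, s + 2 <= m ->
    ((exists g : 'I_m -> 'I_m,
        #|[set g x | x : 'I_m]| = s /\
        fixnum (complete_graph m) = fixnum (functigraph (complete_graph m) g))
     <-> m <= 2 * s).
Proof.
move=> s_ge2 m m_ge; have m_gt0 : 0 < m by lia.
split => [[g [card_img fix_eq]] | m_le].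
  have := fixnum_functigraph_complete g.
  by rewrite -fix_eq fixnum_complete // card_img; lia.
exists (ext_map s_ge2 m_ge m_le); split; first exact: card_img_ext_map.
by rewrite fixnum_complete // fixnum_functigraph_ext.
Qed.
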